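(* Let $f_A,f_R,F,d_a,d_e$ be as in the context and let $\chi\in[0,1)$. There exists no $R\in(0,\frac{d_e}{2}]$ such that the ring state $\delta_{(R,0)}$ is an equilibrium state of the mean-field equation $\partial_t\rho+\nabla\cdot[\rho\,(F(\cdot,T)\ast\rho)]=0$.
   Context: Let $f_R, f_A:[0,\infty)\to\mathbb{R}$ be smooth integrable functions with $f_R\ge 0$ and $f_A\le 0$, such that there is $d_a>0$ with $(f_A+f_R)(\rho)\le 0$ for $\rho>d_a$ and $(f_A+f_R)(\rho)>0$ for $0\le\rho<d_a$. For $\chi\in[0,1]$, $s=(0,1)$, $l=(1,0)$, let $T=\chi\, s\otimes s + l\otimes l$ and $F(d,T) = f_A(|d|)\,T d + f_R(|d|)\,d$ for $d\in\mathbb{R}^2$; assume $F$ is $C^1$ with bounded total derivatives. Assume there is $d_e>d_a$ such that $\chi f_A+f_R$ is strictly decreasing on $[0,d_e]$ for all $\chi\in[0,1]$. A Borel probability measure $\mu$ on $\mathbb{R}^2$ is an equilibrium state if $K(x):=\int_{\mathbb{R}^2}F(x-y,T)\,d\mu(y)$ satisfies $K\in L^1_{loc}(d\mu)$ and $K=0$ on $\mathrm{supp}(\mu)$ $\mu$-a.e. For $R>0$ the ring state $\delta_{(R,0)}$ is the uniform probability measure on the circle $\{(R\cos\phi,R\sin\phi)\}$. *)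

From HB Require Import structures.
From mathcomp Require Import all_boot all_order all_algebra.
From mathcomp Require Import all_classical all_reals all_analysis.
Set Implicit Arguments. Unset Strict Implicit. Unset Printing Implicit Defensive.
Import Order.TTheory GRing.Theory Num.Theory.
Import numFieldNormedType.Exports.
Local Open Scope classical_set_scope.
Local Open Scope ring_scope.

Section Defs.
Variable R : realType.

Definition enorm (d : R * R) : R := Num.sqrt (d.1 ^+ 2 + d.2 ^+ 2).

(* T = chi s(x)s + l(x)l with s = (0,1), l = (1,0), applied to d:
   (s(x)s) d = (0, d.2), (l(x)l) d = (d.1, 0). *)
Definition Tapp (chi : R) (d : R * R) : R * R := (d.1, chi * d.2).

Definition Fint (fA fR : R -> R) (chi : R) (d : R * R) : R * R :=
  (fA (enorm d) * (Tapp chi d).1 + fR (enorm d) * d.1,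
   fA (enorm d) * (Tapp chi d).2 + fR (enorm d) * d.2).

Definition ringpt (r phi : R) : R * R := (r * cos phi, r * sin phi).

(* The ring state delta_(r,0) is the push-forward of the normalised Lebesgue
   measure on [0, 2 pi] under phi |-> ringpt r phi.  Hence for the ring state,
   K(x) = int F(x - y, T) d mu(y) = (2 pi)^-1 int_0^{2 pi} F(x - ringpt r phi) dphi. *)
Definition Kring (fA fR : R -> R) (chi r : R) (x : R * R) : R * R :=
  ((2 * pi)^-1 * Rintegral lebesgue_measure `[0, 2 * pi]%classic
      (fun phi => (Fint fA fR chi (x - ringpt r phi)).1),
   (2 * pi)^-1 * Rintegral lebesgue_measure `[0, 2 * pi]%classic
      (fun phi => (Fint fA fR chi (x - ringpt r phi)).2)).

(* The ring state delta_(r,0) is an equilibrium state: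
   K in L^1_loc(d mu): for every compact C, int_C |K| d mu < oo,
   and K = 0 mu-a.e. on supp(mu) (= the circle). *)
Definition ring_equilibrium (fA fR : R -> R) (chi r : R) : Prop :=
  (forall C : set (R * R), compact C ->
     lebesgue_measure.-integrable
       (`[0, 2 * pi]%classic `&` (ringpt r @^-1` C))
       (fun phi => (enorm (Kring fA fR chi r (ringpt r phi)))%:E)) /\
  lebesgue_measure.-negligible
    [set phi : R | `[0, 2 * pi]%classic phi /\
                   Kring fA fR chi r (ringpt r phi) <> 0].

(* smooth on [0, oo): restriction of a C^oo function on R *)
Definition smooth_on_halfline (f : R -> R) : Prop :=
  exists g : R -> R, (forall n x, derivable (derive1n n g) x 1) /\
                     (forall x, 0 <= x -> g x = f x).

End Defs.

(* Since the integrand is 2pi-periodic, shifting the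
   angle by t gives K(ringpt r t) = (2 pi)^-1 (cos t * I_1, sin t * I_chi), where I_c is the
   integral of the radial part of the force with attraction weighted by c; the tangential
   part is odd and integrates to 0. The set of t in (0, pi/2) is not negligible, so if K
   vanished a.e. on the ring then I_1 = I_chi = 0. But
   I_chi - chi I_1 = (1 - chi) \int f_R(|chord|) r (1 - cos p) dp > 0,
   because f_R >= 0 is strictly decreasing on [0, 2 r], a subset of [0, d_e]. Only the
   continuity of f_A and f_R, f_R >= 0 and this monotonicity (the case c = 0 of the
   hypothesis) are needed. *)

From HB Require Import structures.
From mathcomp Require Import all_boot all_order all_algebra.
From mathcomp Require Import all_classical all_reals all_analysis.
From mathcomp Require Import ring lra.
Import Order.TTheory GRing.Theory Num.Theory.
Import numFieldNormedType.Exports.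
Local Open Scope classical_set_scope.
Local Open Scope ring_scope.

Section interval_integrals.
Context {R : realType}.
Local Notation mu := (@lebesgue_measure R).
Implicit Types (h : R -> R) (a b c : R).

Lemma continuous_integrable_itv a b h :
  continuous h -> mu.-integrable `[a, b] (EFin \o h).
Proof.
move=> ch; apply: continuous_compact_integrable; first exact: segment_compact.
exact: continuous_subspaceT.
Qed.

Lemma Rintegral_itv_split h a b c : a <= b -> b <= c -> continuous h ->
  \int[mu]_(x in `[a, c]) h x =
  \int[mu]_(x in `[a, b]) h x + \int[mu]_(x in `[b, c]) h x.
Proof.
move=> ab bc ch.
have := @Rintegral_itvB R h (BLeft a) (BRight c) b (continuous_integrable_itv a c h ch).
rewrite !bnd_simp => /(_ ab bc).
rewrite Rintegral_itv_obnd_cbnd => [<-|]; first by rewrite addrC subrK.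
apply: integrableS (continuous_integrable_itv b c h ch) => //.
by apply: subset_itvr; rewrite bnd_simp.
Qed.

Lemma Rintegral_itv_shift h a b c : a <= b -> continuous h ->
  \int[mu]_(x in `[a + c, b + c]) h x = \int[mu]_(x in `[a, b]) h (x + c).
Proof.
move=> ab ch.
have shift1 : derive1 (shift c) = cst 1.
  by apply/funext => z; rewrite derive1E; exact: (congr1 (@^~ z) (derive_shift 1 c)).
rewrite /Rintegral; congr fine.
rewrite (@integration_by_substitution_increasing _ (shift c) h a b ab).
- by apply: eq_integral => x _; rewrite shift1 /= mulr1.
- by move=> x y _ _ xy; rewrite /= ltrD2r.
- by rewrite shift1 => ? _; exact: cvg_cst.
- by rewrite shift1; exact: is_cvg_cst.
- by rewrite shift1; exact: is_cvg_cst.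
- split.
  + by move=> x _; apply: ex_derive; exact: is_derive_shift.
  + by apply: cvg_at_right_filter; apply: cvgD; [exact: cvg_id | exact: cvg_cst].
  + by apply: cvg_at_left_filter; apply: cvgD; [exact: cvg_id | exact: cvg_cst].
- exact: continuous_subspaceT.
Qed.

Lemma Rintegral_itv_opp h a b : a <= b -> continuous h ->
  \int[mu]_(x in `[- b, - a]) h x = \int[mu]_(x in `[a, b]) h (- x).
Proof.
move=> ab ch; rewrite /Rintegral; congr fine.
by rewrite integration_by_substitution_oppr //; exact: continuous_subspaceT.
Qed.

Lemma Rintegral_periodic_shift h P t : 0 <= t <= P -> continuous h ->
  periodic h P ->
  \int[mu]_(x in `[0, P]) h x = \int[mu]_(x in `[0, P]) h (x + t).
Proof.
move=> /andP[t0 tP] ch hP; have P0 := le_trans t0 tP.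
rewrite -Rintegral_itv_shift // add0r (Rintegral_itv_split h t P) ?lerDl //.
have := Rintegral_itv_shift h 0 t P t0 ch; rewrite add0r addrC => ->.
under [X in _ + X]eq_Rintegral => x _ do rewrite hP.
by rewrite addrC -Rintegral_itv_split.
Qed.

Lemma Rintegral_odd_periodic h m : 0 <= m -> continuous h ->
  (forall x, h (- x) = - h x) -> periodic h (m + m) ->
  \int[mu]_(x in `[0, m + m]) h x = 0.
Proof.
move=> m0 ch hN hP.
rewrite (Rintegral_itv_split h 0 m) ?lerDl //.
have := Rintegral_itv_shift h (- m) 0 (m + m) _ ch.
rewrite oppr_le0 addKr add0r => /(_ m0) ->.
under [X in _ + X]eq_Rintegral => x _ do rewrite hP.
rewrite -oppr0 Rintegral_itv_opp //.
under [X in _ + X]eq_Rintegral => x _ do rewrite hN -mulN1r.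
by rewrite RintegralZl ?continuous_integrable_itv // mulN1r oppr0 subrr.
Qed.

Lemma Rintegral_itv_gt0 h a x y b m : a <= x -> x < y -> y <= b ->
  continuous h -> (forall p, 0 <= h p) ->
  0 < m -> (forall p, x <= p <= y -> m <= h p) ->
  0 < \int[mu]_(p in `[a, b]) h p.
Proof.
move=> ax xy yb ch h0 m0 hm.
have lower : m * (y - x) <= \int[mu]_(p in `[x, y]) h p.
  have <- : fine (mu `[x, y]) = y - x.
    by rewrite lebesgue_measure_itv /= lte_fin xy.
  rewrite -Rintegral_cst //; apply: le_Rintegral => //.
  - exact: continuous_integrable_itv (fun _ => cvg_cst _).
  - exact: continuous_integrable_itv.
rewrite (Rintegral_itv_split h a x) ?(le_trans (ltW xy)) //.
rewrite (Rintegral_itv_split h x y) ?(ltW xy) //.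
have lower_gt0 : 0 < m * (y - x) by rewrite mulr_gt0 // subr_gt0.
apply: (lt_le_trans lower_gt0); apply: (le_trans lower).
by rewrite addrCA lerDl addr_ge0 // Rintegral_ge0.
Qed.

Lemma not_negligible_itv a b : a < b -> ~ mu.-negligible `]a, b[.
Proof.
move=> ab; rewrite negligibleP; last exact: measurable_itv.
move=> ab0; have := lebesgue_measure_itv `]a, b[.
by rewrite ab0 /= lte_fin ab => /eqP; rewrite eq_sym -EFinD eqe subr_eq0 gt_eqF.
Qed.

End interval_integrals.

Section ring_state.
Context {R : realType}.
Local Notation mu := (@lebesgue_measure R).
Variables (fA fR : R -> R) (chi r : R).

Definition chord (p : R) : R := Num.sqrt (r ^+ 2 * (2 - 2 * cos p)).

Lemma continuous_chord : continuous chord.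
Proof.
move=> p; apply: (@continuous_comp _ _ _ (fun p => r ^+ 2 * (2 - 2 * cos p)) Num.sqrt).
  by apply: cvgM; [exact: cvg_cst | apply: cvgB; [exact: cvg_cst | apply: cvgM;
    [exact: cvg_cst | exact: continuous_cos]]].
exact: sqrt_continuous.
Qed.

Lemma enorm_ringpt_sub t p : enorm (ringpt r t - ringpt r (p + t)) = chord p.
Proof.
rewrite /enorm /chord /ringpt /= cosD sinD; congr Num.sqrt.
transitivity (r ^+ 2 * (1 - 2 * cos p + (cos p ^+ 2 + sin p ^+ 2)) *
              (cos t ^+ 2 + sin t ^+ 2)); first by ring.
by rewrite !cos2Dsin2; ring.
Qed.

Lemma ler_cos : {in `[0, pi] &, {mono @cos R : x y /~ y <= x}}.
Proof. by move=> x y xpi ypi; rewrite !leNgt ltr_cos. Qed.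

Lemma ler_chord : {in `[0, pi] &, {homo chord : p q / p <= q}}.
Proof.
move=> p q ppi qpi pq; rewrite /chord ler_sqrt; last first.
  by rewrite mulr_ge0 ?sqr_ge0 // subr_ge0 -[2 in leRHS]mulr1 ler_wpM2l ?cos_le1.
by rewrite ler_wpM2l ?sqr_ge0 // lerD2l lerN2 ler_wpM2l // ler_cos.
Qed.

Lemma chord_lt_diameter p : 0 < r -> 0 <= p < pi -> chord p < 2 * r.
Proof.
move=> r0 /andP[p0 ppi].
have cosp : -1 < cos p.
  by rewrite -cospi ltr_cos // in_itv /= ?p0 ?lexx ?pi_ge0 ?ltW.
have -> : 2 * r = Num.sqrt ((2 * r) ^+ 2) by rewrite sqrtr_sqr ger0_norm ?mulr_ge0 ?ltW.
rewrite /chord ltr_sqrt ?exprn_gt0 ?mulr_gt0 // exprMn mulrC ltr_pM2r ?exprn_gt0 //.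
lra.
Qed.

(* [c] weights the attraction: [c = 1] in the [l]-component of [F],
   [c = chi] in the [s]-component. *)
Definition ring_force (c p : R) : R := c * fA (chord p) + fR (chord p).
Definition radial_force (c p : R) : R := ring_force c p * (r * (1 - cos p)).
Definition tangential_force (c p : R) : R := ring_force c p * (r * sin p).
Definition repulsive_radial_force (p : R) : R := fR (chord p) * (r * (1 - cos p)).

Lemma Fint_ringpt_sub1 t p :
  (Fint fA fR chi (ringpt r t - ringpt r (p + t))).1 =
  cos t * radial_force 1 p + sin t * tangential_force 1 p.
Proof.
rewrite /Fint /= enorm_ringpt_sub /radial_force /tangential_force /ring_force.
by rewrite /ringpt /= ?cosD ?sinD; ring.
Qed.

Lemma Fint_ringpt_sub2 t p :
  (Fint fA fR chi (ringpt r t - ringpt r (p + t))).2 =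
  sin t * radial_force chi p + (- cos t) * tangential_force chi p.
Proof.
rewrite /Fint /= enorm_ringpt_sub /radial_force /tangential_force /ring_force.
by rewrite /ringpt /= ?cosD ?sinD; ring.
Qed.

Lemma radial_force_chi p :
  radial_force chi p = chi * radial_force 1 p + (1 - chi) * repulsive_radial_force p.
Proof. by rewrite /radial_force /repulsive_radial_force /ring_force; ring. Qed.

Lemma periodic_ringpt : periodic (ringpt r) (2 * pi).
Proof. by move=> p; rewrite /ringpt mulr_natl cosD2pi sinD2pi. Qed.

Section continuity.
Hypotheses (fA_chord : continuous (fA \o chord)) (fR_chord : continuous (fR \o chord)).

Lemma continuous_ring_force c : continuous (ring_force c).
Proof.
move=> p; apply: cvgD; last exact: fR_chord.
by apply: cvgM; [exact: cvg_cst | exact: fA_chord].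
Qed.

Lemma continuous_radial_force c : continuous (radial_force c).
Proof.
move=> p; apply: cvgM; first exact: continuous_ring_force.
apply: cvgM; first exact: cvg_cst.
by apply: cvgB; [exact: cvg_cst | exact: continuous_cos].
Qed.

Lemma continuous_tangential_force c : continuous (tangential_force c).
Proof.
move=> p; apply: cvgM; first exact: continuous_ring_force.
by apply: cvgM; [exact: cvg_cst | exact: continuous_sin].
Qed.

Lemma continuous_repulsive_radial_force : continuous repulsive_radial_force.
Proof.
move=> p; apply: cvgM; first exact: fR_chord.
apply: cvgM; first exact: cvg_cst.
by apply: cvgB; [exact: cvg_cst | exact: continuous_cos].
Qed.

Lemma Rintegral_tangential_force c :
  \int[mu]_(p in `[0, 2 * pi]) tangential_force c p = 0.
Proof.
rewrite mulr_natl mulr2n; apply: Rintegral_odd_periodic; first exact: pi_ge0.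
- exact: continuous_tangential_force.
- by move=> p; rewrite /tangential_force /ring_force /chord cosN sinN !mulrN.
- by move=> p; rewrite /tangential_force /ring_force /chord -mulr2n cosD2pi sinD2pi.
Qed.

Lemma Rintegral_ring_component (k : R -> R) (a b c t : R) :
  0 <= t <= 2 * pi -> periodic k (2 * pi) ->
  (forall p, k (p + t) = a * radial_force c p + b * tangential_force c p) ->
  \int[mu]_(p in `[0, 2 * pi]) k p = a * \int[mu]_(p in `[0, 2 * pi]) radial_force c p.
Proof.
move=> t02 kP kE.
have k_cont : continuous k.
  have -> : k = fun p => a * radial_force c (p - t) + b * tangential_force c (p - t).
    by apply/funext => p; rewrite -kE subrK.
  move=> p; apply: cvgD; apply: cvgM; try exact: cvg_cst.
  - apply: (@continuous_comp _ _ _ (fun x => x - t)); last exact: continuous_radial_force.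
    by apply: cvgB; [exact: cvg_id | exact: cvg_cst].
  - apply: (@continuous_comp _ _ _ (fun x => x - t)); last exact: continuous_tangential_force.
    by apply: cvgB; [exact: cvg_id | exact: cvg_cst].
rewrite (Rintegral_periodic_shift _ _ _ t02 k_cont kP).
under eq_Rintegral => p _ do rewrite kE.
rewrite RintegralD //; last 2 first.
- apply: continuous_integrable_itv => p.
  by apply: cvgM; [exact: cvg_cst | exact: continuous_radial_force].
- apply: continuous_integrable_itv => p.
  by apply: cvgM; [exact: cvg_cst | exact: continuous_tangential_force].
rewrite !RintegralZl ?continuous_integrable_itv //.
- by rewrite Rintegral_tangential_force mulr0 addr0.
- exact: continuous_tangential_force.
- exact: continuous_radial_force.
Qed.

Lemma Kring_ringpt t : 0 <= t <= 2 * pi ->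
  Kring fA fR chi r (ringpt r t) =
  ((2 * pi)^-1 * (cos t * \int[mu]_(p in `[0, 2 * pi]) radial_force 1 p),
   (2 * pi)^-1 * (sin t * \int[mu]_(p in `[0, 2 * pi]) radial_force chi p)).
Proof.
move=> t02; rewrite /Kring; congr (_, _); congr (_ * _).
- apply: (Rintegral_ring_component _ _ _ _ _ t02); last exact: Fint_ringpt_sub1.
  by move=> p; rewrite periodic_ringpt.
- apply: (Rintegral_ring_component _ _ _ _ _ t02); last exact: Fint_ringpt_sub2.
  by move=> p; rewrite periodic_ringpt.
Qed.

Lemma Rintegral_radial_force_chi :
  \int[mu]_(p in `[0, 2 * pi]) radial_force chi p =
  chi * \int[mu]_(p in `[0, 2 * pi]) radial_force 1 p +
  (1 - chi) * \int[mu]_(p in `[0, 2 * pi]) repulsive_radial_force p.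
Proof.
under eq_Rintegral => p _ do rewrite radial_force_chi.
rewrite RintegralD //; last 2 first.
- apply: continuous_integrable_itv => p.
  by apply: cvgM; [exact: cvg_cst | exact: continuous_radial_force].
- apply: continuous_integrable_itv => p.
  by apply: cvgM; [exact: cvg_cst | exact: continuous_repulsive_radial_force].
rewrite !RintegralZl ?continuous_integrable_itv //.
- exact: continuous_repulsive_radial_force.
- exact: continuous_radial_force.
Qed.

Lemma Kring_ringpt_neq0 t : chi != 1 ->
  0 < \int[mu]_(p in `[0, 2 * pi]) repulsive_radial_force p ->
  0 < t < pi / 2 -> Kring fA fR chi r (ringpt r t) <> 0.
Proof.
move=> chi1 repulsive_gt0 /andP[t0 tpi2].
have pi_gt0 : 0 < pi :> R := pi_gt0 R.
have t02 : 0 <= t <= 2 * pi by apply/andP; split; lra.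
have pi2_neq0 : (2 * pi)^-1 != 0 :> R by rewrite invr_eq0 mulf_neq0 ?gt_eqF.
have cos_neq0 : cos t != 0 by rewrite gt_eqF // cos_gt0_pihalf //; apply/andP; split; lra.
have sin_neq0 : sin t != 0 by rewrite gt_eqF // sin_gt0_pihalf //; apply/andP; split.
rewrite Kring_ringpt // => K0.
move: (congr1 fst K0) (congr1 snd K0) => /= /eqP + /eqP.
rewrite !mulf_eq0 (negbTE pi2_neq0) (negbTE cos_neq0) (negbTE sin_neq0) /=.
rewrite Rintegral_radial_force_chi => /eqP -> /eqP.
by rewrite mulr0 add0r => /eqP; rewrite mulf_eq0 subr_eq0 eq_sym (negbTE chi1) gt_eqF.
Qed.

Lemma Rintegral_repulsive_radial_force_gt0 (de : R) : 0 < r -> 2 * r <= de ->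
  (forall x, 0 <= x -> 0 <= fR x) ->
  (forall x y, 0 <= x -> x < y -> y <= de -> fR y < fR x) ->
  0 < \int[mu]_(p in `[0, 2 * pi]) repulsive_radial_force p.
Proof.
move=> r0 rde fR_ge0 fR_decr.
have pi_gt0 : 0 < pi :> R := pi_gt0 R.
(* On [pi/2, q] we have [1 - cos p >= 1] and [chord p <= chord q < 2 r <= de]. *)
pose q : R := pi / 2 + pi / 4.
have q_pi : q \in `[0, pi] by rewrite in_itv /=; apply/andP; split; rewrite /q; lra.
have fR_chord_q : 0 < fR (chord q).
  apply: le_lt_trans (fR_ge0 (2 * r) _) _; first by rewrite mulr_ge0 ?ltW.
  apply: (fR_decr _ _ (sqrtr_ge0 _) _ rde).
  by apply: chord_lt_diameter => //; apply/andP; split; rewrite /q; lra.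
apply: (Rintegral_itv_gt0 _ 0 (pi / 2) q (2 * pi) (fR (chord q) * r)).
- lra.
- rewrite /q; lra.
- rewrite /q; lra.
- exact: continuous_repulsive_radial_force.
- move=> p; apply: mulr_ge0; first exact/fR_ge0/sqrtr_ge0.
  by rewrite mulr_ge0 ?subr_ge0 ?cos_le1 ?ltW.
- exact: mulr_gt0.
move=> p /andP[pih pq].
have p_pi : p \in `[0, pi] by rewrite in_itv /=; apply/andP; split; rewrite /q in pq; lra.
have cos_le0 : cos p <= 0.
  by rewrite -cos_pihalf ler_cos // in_itv /=; apply/andP; split; lra.
have fR_le : fR (chord q) <= fR (chord p).
  have [->|chord_pq] := eqVneq (chord p) (chord q); first exact: lexx.
  apply/ltW/fR_decr; first exact: sqrtr_ge0.
  - by rewrite lt_neqAle chord_pq ler_chord.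
  - by apply: le_trans rde; apply/ltW/chord_lt_diameter => //; apply/andP; split; rewrite /q; lra.
apply: ler_pM; [exact: ltW | exact: ltW | exact: fR_le |].
rewrite -[leLHS]mulr1; apply: ler_wpM2l; [exact: ltW | lra].
Qed.

End continuity.
End ring_state.

Lemma smooth_on_halfline_continuous_comp {R : realType} (f g : R -> R) :
  smooth_on_halfline f -> continuous g -> (forall x, 0 <= g x) ->
  continuous (f \o g).
Proof.
move=> [h [h_smooth hf]] g_cont g_ge0.
have -> : f \o g = h \o g by apply/funext => x /=; rewrite hf.
move=> x; apply: continuous_comp; first exact: g_cont.
exact/differentiable_continuous/derivable1_diffP/(h_smooth 0%N).
Qed.

Theorem proposition3p6 (R : realType) (fA fR : R -> R) (da de chi : R) :
  smooth_on_halfline fA -> smooth_on_halfline fR ->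
  lebesgue_measure.-integrable `[0%R, +oo[%classic (fun x => (fA x)%:E) ->
  lebesgue_measure.-integrable `[0%R, +oo[%classic (fun x => (fR x)%:E) ->
  (forall rho, 0 <= rho -> 0 <= fR rho) ->
  (forall rho, 0 <= rho -> fA rho <= 0) ->
  0 < da ->
  (forall rho, da < rho -> fA rho + fR rho <= 0) ->
  (forall rho, 0 <= rho < da -> 0 < fA rho + fR rho) ->
  da < de ->
  (forall c, 0 <= c <= 1 -> forall x y, 0 <= x -> x < y -> y <= de ->
       c * fA y + fR y < c * fA x + fR x) ->
  0 <= chi < 1 ->
  (* F( . ,T) is C^1 with bounded total derivative *)
  (forall d, differentiable (Fint fA fR chi) d) ->
  (forall v, continuous (fun d => 'd (Fint fA fR chi) d v)) ->
  (exists M : R, forall d v, `|'d (Fint fA fR chi) d v| <= M * `|v|) ->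
  ~ (exists r : R, 0 < r <= de / 2 /\ ring_equilibrium fA fR chi r).
Proof.
move=> fA_smooth fR_smooth _ _ fR_ge0 _ _ _ _ _ decreasing /andP[_ chi_lt1] _ _ _
  [r [/andP[r_gt0 r_le] [_ Kring_negligible]]].
have fR_decr x y : 0 <= x -> x < y -> y <= de -> fR y < fR x.
  by have := decreasing 0 _ x y; rewrite !mul0r !add0r lexx ler01; apply.
have chord_ge0 p : 0 <= chord r p by exact: sqrtr_ge0.
have fA_chord := smooth_on_halfline_continuous_comp _ _ fA_smooth (continuous_chord r) chord_ge0.
have fR_chord := smooth_on_halfline_continuous_comp _ _ fR_smooth (continuous_chord r) chord_ge0.
have repulsive_gt0 : 0 < \int[lebesgue_measure]_(p in `[0, 2 * pi]) repulsive_radial_force fR r p.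
  by apply: (Rintegral_repulsive_radial_force_gt0 _ _ fR_chord _ r_gt0 _ fR_ge0 fR_decr); lra.
have pi_gt0 : 0 < pi :> R := pi_gt0 R.
apply: (@not_negligible_itv R 0 (pi / 2)); first lra.
apply: negligibleS Kring_negligible => t; rewrite /= in_itv /= => t_itv.
split; last by apply: Kring_ringpt_neq0 => //; rewrite lt_eqF.
by case/andP: t_itv => t0 t_lt; rewrite in_itv /=; apply/andP; split; lra.
Qed.
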